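(* Let $K\in\{\mathbb R,\mathbb C,\mathbb H\}$ and let $(E,d)$ be a metric vector space over $K$ such that $d$ is asymptotically multiplicative, unbounded on every non-trivial linear subspace, and such that for every $C_1>1$ there exists $C_0\ge0$ with $d\big(\sum_{i=1}^n x_i,\sum_{i=1}^n y_i\big)\le C_1\sum_{i=1}^n d(x_i,y_i)+nC_0$ for all $n\ge2$ and $x_1,\dots,x_n,y_1,\dots,y_n\in E$. Let $d_0(x,y)=\int_{\mathbb U}d(ux,uy)\,d\mu(u)$ and $\delta_0(x,y)=\lim_{n\to+\infty}\frac1n d_0(nx,ny)$. Then $\delta_0$ is translation invariant, i.e. $\delta_0(x+z,y+z)=\delta_0(x,y)$ for all $x,y,z\in E$, and setting $\|x-y\|=\delta_0(x,y)$ defines a norm $\|\cdot\|$ on $E$ such that the distance $\|x-y\|$ is asymptotically isometric to $d_0$ and to $d$.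
   Context: A metric vector space is a topological vector space over $K$ whose topology is generated by the metric $d$. $\mathbb U=\{u\in K:|u|=1\}$, $\mu$ the right-invariant Haar probability measure on $\mathbb U$. $d$ is asymptotically multiplicative if for every $C_1>1$ there exist $C_2,C_3\ge0$ with $C_1^{-1}|\lambda|d(x,y)-C_2|\lambda|-C_3\le d(\lambda x,\lambda y)\le C_1|\lambda|d(x,y)+C_2|\lambda|+C_3$ for all $\lambda\in K$, $x,y\in E$. A distance $\rho$ is asymptotically isometric to a distance $\sigma$ if for every $A>1$ there is $B\ge0$ with $A^{-1}\sigma-B\le\rho\le A\sigma+B$ pointwise. (Under these hypotheses the limit defining $\delta_0$ exists.) *)

From mathcomp Require Import all_boot all_order all_algebra.
From mathcomp Require Import all_classical all_reals all_analysis.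
Set Implicit Arguments. Unset Strict Implicit. Unset Printing Implicit Defensive.
Import Order.TTheory GRing.Theory Num.Theory numFieldTopology.Exports numFieldNormedType.Exports.
Local Open Scope ring_scope.
Local Open Scope classical_set_scope.

(* The scalar "field" K in {R, C, H}, given concretely over a real     *)
(* closed field R : realType as R, R^2 (complex product) and R^4       *)
(* (Hamilton product), each with its Euclidean absolute value and its  *)
(* Borel (= product) sigma-algebra.                                    *)
Record scalars (R : realType) := Scalars {
  sc_disp : measure_display;
  sc_type : measurableType sc_disp;
  sc_zero : sc_type;
  sc_one  : sc_type;
  sc_add  : sc_type -> sc_type -> sc_type;
  sc_opp  : sc_type -> sc_type;
  sc_mul  : sc_type -> sc_type -> sc_type;
  sc_abs  : sc_type -> R }.

Section Scalars.
Variable R : realType.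

Definition real_scalars : scalars R :=
  @Scalars R _ (R : measurableType _) 0 1 +%R -%R *%R (fun x : R => `|x|).

(* complex numbers a + b i as pairs (a, b) *)
Definition cmul (z w : R * R) : R * R :=
  (z.1 * w.1 - z.2 * w.2, z.1 * w.2 + z.2 * w.1).
Definition complex_scalars : scalars R :=
  @Scalars R _ ((R * R)%type : measurableType _) (0, 0) (1, 0)
    (fun z w => (z.1 + w.1, z.2 + w.2)) (fun z => (- z.1, - z.2)) cmul
    (fun z => Num.sqrt (z.1 ^+ 2 + z.2 ^+ 2)).

(* quaternions a + b i + c j + d k as ((a, b), (c, d)) *)
Definition qmul (p q : (R * R) * (R * R)) : (R * R) * (R * R) :=
  let: ((a1, b1), (c1, d1)) := p in
  let: ((a2, b2), (c2, d2)) := q in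
  ((a1 * a2 - b1 * b2 - c1 * c2 - d1 * d2,
    a1 * b2 + b1 * a2 + c1 * d2 - d1 * c2),
   (a1 * c2 - b1 * d2 + c1 * a2 + d1 * b2,
    a1 * d2 + b1 * c2 - c1 * b2 + d1 * a2)).
Definition qadd (p q : (R * R) * (R * R)) : (R * R) * (R * R) :=
  ((p.1.1 + q.1.1, p.1.2 + q.1.2), (p.2.1 + q.2.1, p.2.2 + q.2.2)).
Definition qopp (p : (R * R) * (R * R)) : (R * R) * (R * R) :=
  ((- p.1.1, - p.1.2), (- p.2.1, - p.2.2)).
Definition qabs (p : (R * R) * (R * R)) : R :=
  Num.sqrt (p.1.1 ^+ 2 + p.1.2 ^+ 2 + p.2.1 ^+ 2 + p.2.2 ^+ 2).
Definition quaternion_scalars : scalars R :=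
  @Scalars R _ (((R * R) * (R * R))%type : measurableType _)
    ((0, 0), (0, 0)) ((1, 0), (0, 0)) qadd qopp qmul qabs.

End Scalars.

Inductive scalar_kind := K_real | K_complex | K_quaternion.

Definition scal (R : realType) (k : scalar_kind) : scalars R :=
  match k with
  | K_real => real_scalars R
  | K_complex => complex_scalars R
  | K_quaternion => quaternion_scalars R
  end.

Section Defs.
Variables (R : realType) (K : scalars R) (E : zmodType).
Notation KT := (sc_type K).
Variable act : KT -> E -> E.
Variable d : E -> E -> R.

Definition is_left_module : Prop :=
  [/\ forall a x y, act a (x + y) = act a x + act a y,
      forall a b x, act (sc_add a b) x = act a x + act b x,
      forall a b x, act (sc_mul a b) x = act a (act b x) &
      forall x, act (sc_one K) x = x].

Definition is_metric : Prop :=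
  [/\ forall x y, 0 <= d x y,
      forall x y, d x y = 0 <-> x = y,
      forall x y, d x y = d y x &
      forall x y z, d x z <= d x y + d y z].

Definition kdist (a b : KT) : R := sc_abs (sc_add a (sc_opp b)).

Definition metric_vector_space : Prop :=
  [/\ is_left_module, is_metric,
      (forall x y (e : R), 0 < e -> exists2 del : R, 0 < del &
         forall x' y', d x x' < del -> d y y' < del -> d (x + y) (x' + y') < e) &
      (forall a x (e : R), 0 < e -> exists2 del : R, 0 < del &
         forall a' x', kdist a a' < del -> d x x' < del ->
           d (act a x) (act a' x') < e)].

Definition asymptotically_multiplicative : Prop :=
  forall C1 : R, 1 < C1 -> exists C2 C3 : R, [/\ 0 <= C2, 0 <= C3 &
    forall (l : KT) x y,
      C1^-1 * sc_abs l * d x y - C2 * sc_abs l - C3 <= d (act l x) (act l y)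
      /\ d (act l x) (act l y) <= C1 * sc_abs l * d x y + C2 * sc_abs l + C3].

Definition linear_subspace (F : set E) : Prop :=
  [/\ F 0, (forall x y, F x -> F y -> F (x + y)) &
      (forall a x, F x -> F (act a x))].

Definition unbounded_on_nontrivial_subspaces : Prop :=
  forall F : set E, linear_subspace F -> (exists2 x, F x & x <> 0) ->
    forall M : R, exists x y, [/\ F x, F y & M < d x y].

Definition sum_condition : Prop :=
  forall C1 : R, 1 < C1 -> exists2 C0 : R, 0 <= C0 &
    forall (n : nat) (x y : 'I_n -> E), (2 <= n)%N ->
      d (\sum_(i < n) x i) (\sum_(i < n) y i)
        <= C1 * \sum_(i < n) d (x i) (y i) + n%:R * C0.

Definition unit_sphere : set KT := [set u | sc_abs u = 1].

(* mu is the right-invariant Haar probability measure on U (viewed as a *)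
(* Borel probability measure on K carried by U)                         *)
Definition right_haar_probability (mu : probability KT R) : Prop :=
  mu unit_sphere = 1%E /\
  forall u, unit_sphere u -> forall A : set KT, measurable A ->
    mu ((fun v => sc_mul v u) @^-1` A) = mu A.

Definition d0 (mu : probability KT R) (x y : E) : R :=
  Rintegral mu unit_sphere (fun u => d (act u x) (act u y)).

Definition delta0_seq (mu : probability KT R) (x y : E) : R^nat :=
  fun n => (n%:R)^-1 * d0 mu (x *+ n) (y *+ n).

Definition delta0 (mu : probability KT R) (x y : E) : R :=
  limn (delta0_seq mu x y).

Definition is_norm (N : E -> R) : Prop :=
  [/\ forall x, 0 <= N x,
      forall x, N x = 0 <-> x = 0,
      forall a x, N (act a x) = sc_abs a * N x &
      forall x y, N (x + y) <= N x + N y].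

End Defs.

Definition asymptotically_isometric (R : realType) (T : Type)
    (rho sigma : T -> T -> R) : Prop :=
  forall A : R, 1 < A -> exists2 B : R, 0 <= B &
    forall x y, A^-1 * sigma x y - B <= rho x y /\ rho x y <= A * sigma x y + B.

From mathcomp Require Import all_boot all_order all_algebra.
From mathcomp Require Import all_classical all_reals all_analysis.
From mathcomp Require Import ring lra measurable_realfun.
Import Order.TTheory GRing.Theory Num.Theory numFieldTopology.Exports numFieldNormedType.Exports.
Local Open Scope ring_scope.
Local Open Scope classical_set_scope.
Set Implicit Arguments. Unset Strict Implicit. Unset Printing Implicit Defensive.

(* For fixed x, y the sequence a_n = d0 (n x) (n y) satisfies
   a_k ~ (k / m) a_m up to a factor close to 1 and additive constants, because
   d0, like d, is asymptotically multiplicative; a Cauchy argument then makes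
   a_n / n converge.  Every asymptotic inequality satisfied by d0
   (multiplicativity, the two-term sum condition, comparison with d) loses its
   additive constants after division by n and its multiplicative constant as
   C1 -> 1, so delta0 is translation invariant, homogeneous, subadditive and
   asymptotically isometric to d0 and d.  Definiteness follows from
   unboundedness: if delta0 x 0 = 0, then d would be bounded on the line K x. *)

Section RealSequences.
Variable R : realType.

Lemma le_of_forall_gt1_mul (p q : R) :
  0 <= q -> (forall C, 1 < C -> p <= C * q) -> p <= q.
Proof.
move=> q0 H; rewrite leNgt; apply/negP => qp.
have [q_eq0|qn0] := eqVneq q 0.
  by move: (H 2 (ltr1n _ 2)) qp; rewrite q_eq0 mulr0 leNgt => /negP.
have q_gt0 : 0 < q by rewrite lt_def qn0 q0.
have C1 : 1 < (p + q) / (2 * q) by rewrite ltr_pdivlMr ?mulr_gt0 //; lra.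
have := H _ C1; have -> : (p + q) / (2 * q) * q = (p + q) / 2 by field.
lra.
Qed.

Lemma near_oo_norm_div_le (B e : R) : 0 < e ->
  \forall n \near \oo, `|B| / n%:R <= e.
Proof.
move=> e0; exists (Num.truncn (`|B| / e)).+1 => // n /= Hn.
have n0 : (0 < n)%N by apply: leq_trans Hn.
rewrite ler_pdivrMr ?ltr0n // -ler_pdivrMl //.
apply: ltW; apply: lt_le_trans (truncnS_gt _) _.
by rewrite mulrC ler_nat.
Qed.

Lemma ler_lim_affine (u v : R^nat) (l l' A A' K B : R) :
  u @ \oo --> l -> v @ \oo --> l' ->
  (forall n, (0 < n)%N -> A * u n <= A' * v n + K + B / n%:R) ->
  A * l <= A' * l' + K.
Proof.
move=> ul vl H; apply/ler_addgt0Pr => e e0.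
have Aul : (fun n => A * u n) @ \oo --> A * l by exact: cvgM (cvg_cst A) ul.
have A'vl : (fun n => A' * v n + K + e) @ \oo --> A' * l' + K + e.
  by apply: cvgD; [apply: cvgD; [exact: cvgM (cvg_cst A') vl|exact: cvg_cst]|exact: cvg_cst].
apply: (ler_cvg_to Aul A'vl).
near=> n.
have n0 : (0 < n)%N by near: n; exists 1%N.
have hB : B / n%:R <= `|B| / n%:R by rewrite ler_wpM2r ?invr_ge0 ?ler0n ?ler_norm.
have : `|B| / n%:R <= e by near: n; exact: near_oo_norm_div_le.
have := H n n0; lra.
Unshelve. all: by end_near. Qed.

Definition asymptotically_homogeneous (a : R^nat) : Prop :=
  forall C1, 1 < C1 -> exists C2 C3, [/\ 0 <= C2, 0 <= C3 &
    forall m k, (0 < m)%N ->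
      C1^-1 * (k%:R / m%:R) * a m - C2 * (k%:R / m%:R) - C3 <= a k /\
      a k <= C1 * (k%:R / m%:R) * a m + C2 * (k%:R / m%:R) + C3].

Section RatioBounds.
Variable b : R^nat.
Hypothesis b_ge0 : forall n, 0 <= b n.
Hypothesis b_ratio : forall C, 1 < C -> exists C2 C3, [/\ 0 <= C2, 0 <= C3 &
  forall m k, (0 < m)%N -> (0 < k)%N ->
    C^-1 * b m - C2 / m%:R - C3 / k%:R <= b k /\
    b k <= C * b m + C2 / m%:R + C3 / k%:R].

Lemma ratio_bounded : exists2 M, 0 <= M & forall k, (0 < k)%N -> b k <= M.
Proof.
have [C2 [C3 [C20 C30 H]]] := b_ratio (ltr1n _ 2).
exists (2 * b 1 + C2 + C3); first by rewrite !addr_ge0 ?mulr_ge0.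
move=> k k0; have [_ hk] := H 1%N k isT k0.
apply: (le_trans hk); rewrite divr1 lerD2l.
by rewrite ler_pdivrMr ?ltr0n // ler_peMr // ler1n.
Qed.

Lemma cvgn_of_ratio_bounds : cvgn b.
Proof.
have [M M0 bM] := ratio_bounded.
suff : cauchy (b @ \oo) by exact: cauchy_cvg.
apply: cauchy_exP => e e0; rewrite /fmapE -ball_normE /ball_.
pose t := e / (4 * (M + 1)).
have t0 : 0 < t by rewrite divr_gt0 // mulr_gt0 // ltr_pwDr.
have tM : t * M <= e / 4.
  have <- : t * (M + 1) = e / 4 by rewrite /t; field; rewrite gt_eqF //; lra.
  by rewrite ler_wpM2l ?ltW //; lra.
have [C2 [C3 [C20 C30 H]]] := b_ratio (ltac:(lra) : 1 < 1 + t).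
have [m0 _ Hm] := near_oo_norm_div_le C2 (ltac:(lra) : 0 < e / 4).
have [k0 _ Hk] := near_oo_norm_div_le C3 (ltac:(lra) : 0 < e / 4).
exists (b m0.+1), k0.+1 => // k /= k0k.
have [lo up] := H m0.+1 k isT (leq_ltn_trans (leq0n k0) k0k).
have := Hm m0.+1 (leqnSn _); rewrite ger0_norm // => hm.
have := Hk k (ltnW k0k); rewrite ger0_norm // => hk.
have := bM m0.+1 isT; have := b_ge0 m0.+1 => bm0 bmM.
have tb : t * b m0.+1 <= e / 4.
  by apply: le_trans _ tM; apply: ler_wpM2l; [exact: ltW|].
have inv_ge : (1 - t) * b m0.+1 <= (1 + t)^-1 * b m0.+1.
  by apply: ler_wpM2r => //; rewrite -div1r ler_pdivlMr; nra.
set x2 := C2 / _ in lo up hm; set x3 := C3 / _ in lo up hk.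
rewrite ltr_norml; apply/andP; split; lra.
Qed.

End RatioBounds.

Lemma cvgn_div_asymptotically_homogeneous (a : R^nat) :
  (forall n, 0 <= a n) -> asymptotically_homogeneous a ->
  cvgn (fun n => n%:R^-1 * a n).
Proof.
move=> a0 Ha; apply: cvgn_of_ratio_bounds => [n|C C1].
  by rewrite mulr_ge0 ?invr_ge0.
have C0 : C != 0 by rewrite gt_eqF // (lt_trans ltr01 C1).
have [C2 [C3 [C20 C30 H]]] := Ha C C1; exists C2, C3; split => // m k m0 k0.
have [lo up] := H m k m0.
have km : (k%:R != 0 :> R) /\ (m%:R != 0 :> R) by rewrite !pnatr_eq0 -!lt0n.
have k_ge0 : 0 <= k%:R^-1 :> R by rewrite invr_ge0.
split; [apply: le_trans _ (ler_wpM2l k_ge0 lo) | apply: le_trans (ler_wpM2l k_ge0 up) _];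
  by rewrite le_eqVlt; apply/orP; left; apply/eqP; field; case: km => -> ->; rewrite ?C0.
Qed.

Lemma asymptotically_isometric_trans (T : Type) (rho sigma tau : T -> T -> R) :
  asymptotically_isometric rho sigma -> asymptotically_isometric sigma tau ->
  asymptotically_isometric rho tau.
Proof.
move=> rs st A A1.
pose C := Num.sqrt A.
have CC : C * C = A by rewrite -expr2 sqr_sqrtr // ltW // (lt_trans ltr01 A1).
have C1 : 1 < C by rewrite -sqrtr1 ltr_sqrt // (lt_trans ltr01 A1).
have [B1 B10 H1] := rs C C1; have [B2 B20 H2] := st C C1.
exists (C * B2 + B1); first by rewrite addr_ge0 // mulr_ge0 // ltW // (lt_trans ltr01).
move=> x y; have [l1 u1] := H1 x y; have [l2 u2] := H2 x y.
have C0 : 0 < C by apply: lt_trans C1.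
have Ci : A^-1 = C^-1 * C^-1 by rewrite -CC invfM.
have CiC : C^-1 * C = 1 by rewrite mulVf // gt_eqF.
have Ci1 : C^-1 <= 1 by rewrite invf_le1 // ltW.
have Ci0 : 0 <= C^-1 by rewrite invr_ge0 ltW.
split.
- have := ler_wpM2l Ci0 l2; rewrite Ci; nra.
- have := ler_wpM2l (ltW C0) u2; rewrite -CC; nra.
Qed.

End RealSequences.

Section ProbabilityIntegrals.
Context d (T : measurableType d) (R : realType) (mu : probability T R) (U : set T).
Hypotheses (mU : measurable U) (muU : mu U = 1%E).

Lemma Rintegral_cst_prob (c : R) : Rintegral mu U (fun _ => c) = c.
Proof. by rewrite Rintegral_cst // (_ : fine _ = 1) ?mulr1 //; have /= -> := muU. Qed.

Lemma bounded_integrable (g : T -> R) (M : R) : measurable_fun U g ->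
  (forall u, U u -> `|g u| <= M) -> mu.-integrable U (EFin \o g).
Proof.
move=> mg gM; apply: (le_integrable mU _ _ (finite_measure_integrable_cst mu M mU)).
- exact/measurable_EFinP.
- by move=> u Uu /=; rewrite lee_fin (le_trans (gM u Uu)) // ler_norm.
Qed.

Lemma affine_integrable (f : T -> R) (a b : R) : mu.-integrable U (EFin \o f) ->
  mu.-integrable U (EFin \o (fun u => a * f u + b)).
Proof.
move=> fi; apply: (eq_integrable mU _ _ _
  (integrableD mU (integrableZl mU a fi) (finite_measure_integrable_cst mu b mU))).
by move=> u _ /=; rewrite EFinD EFinM.
Qed.

Lemma Rintegral_affine (f : T -> R) (a b : R) : mu.-integrable U (EFin \o f) ->
  Rintegral mu U (fun u => a * f u + b) = a * Rintegral mu U f + b.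
Proof.
move=> fi; rewrite RintegralD ?RintegralZl ?Rintegral_cst_prob //.
- exact: (eq_integrable mU _ _ _ (integrableZl mU a fi)).
- exact: finite_measure_integrable_cst.
Qed.

Lemma le_Rintegral_affine (f g : T -> R) (a b : R) :
  mu.-integrable U (EFin \o f) -> mu.-integrable U (EFin \o g) ->
  (forall u, U u -> f u <= a * g u + b) ->
  Rintegral mu U f <= a * Rintegral mu U g + b.
Proof.
move=> fi gi fg; rewrite -Rintegral_affine //.
by apply: le_Rintegral => //; exact: affine_integrable.
Qed.

Lemma ge_Rintegral_affine (f g : T -> R) (a b : R) :
  mu.-integrable U (EFin \o f) -> mu.-integrable U (EFin \o g) ->
  (forall u, U u -> a * g u + b <= f u) ->
  a * Rintegral mu U g + b <= Rintegral mu U f.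
Proof.
move=> fi gi gf; rewrite -Rintegral_affine //.
by apply: le_Rintegral => //; exact: affine_integrable.
Qed.

End ProbabilityIntegrals.

Section ScalarTopology.
Variables (R : realType) (K : scalars R).
Notation KT := (sc_type K).

Definition kcont (g : KT -> R) : Prop :=
  forall a (e : R), 0 < e -> exists2 del : R, 0 < del &
    forall b, kdist a b < del -> `|g a - g b| < e.

Definition kopen (O : set KT) : Prop :=
  forall u, O u -> exists2 e : R, 0 < e & forall v, kdist u v < e -> O v.

Lemma kcont_measurable (D : set KT) : measurable D ->
  (forall O, kopen O -> measurable O) ->
  forall g, kcont g -> measurable_fun D g.
Proof.
move=> mD kopen_meas g gc; apply: (measurability _ (RGenOpens.measurableE R)).
move=> _ [_ [a [b ->] <-]]; apply: measurableI => //; apply: kopen_meas.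
move=> u /=; rewrite in_itv /= => /andP[au ub].
have e0 : 0 < Num.min (g u - a) (b - g u) by rewrite lt_min !subr_gt0 au ub.
have [del del0 H] := gc u _ e0.
exists del => // v /H; rewrite lt_min ltr_norml => /andP[/andP[h1 h1'] h2].
by rewrite /= in_itv /=; move: h2; rewrite ltr_norml => /andP[h2 h2']; apply/andP; split; lra.
Qed.

End ScalarTopology.

(* [iota] is the embedding of R into K; the [l'] of [unit_conj] is [u l u^-1]. *)
Record scalar_laws (R : realType) (K : scalars R) (iota : R -> sc_type K) : Prop :=
  ScalarLaws {
    iota_abs : forall t, sc_abs (iota t) = `|t|;
    iotaD : forall s t, iota (s + t) = sc_add (iota s) (iota t);
    iotaM : forall s t, sc_mul (iota s) (iota t) = iota (s * t);
    iota1 : iota 1 = sc_one K;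
    abs_ge0 : forall a : sc_type K, 0 <= sc_abs a;
    unit_conj : forall u : sc_type K, unit_sphere u -> forall l,
      exists2 l', sc_abs l' = sc_abs l & sc_mul u l = sc_mul l' u;
    unit_sphere_measurable : measurable (@unit_sphere R K);
    kopen_measurable : forall O : set (sc_type K), kopen O -> measurable O }.

Section MetricVectorSpace.
Variables (R : realType) (K : scalars R) (E : zmodType).
Notation KT := (sc_type K).
Variables (act : KT -> E -> E) (d : E -> E -> R).
Hypothesis mvs : metric_vector_space act d.

Let module := let: And4 h _ _ _ := mvs in h.
Let metric := let: And4 _ h _ _ := mvs in h.
Let act_continuous := let: And4 _ _ _ h := mvs in h.

Lemma actDr a x y : act a (x + y) = act a x + act a y.
Proof. by case: module. Qed.

Lemma actDl a b x : act (sc_add a b) x = act a x + act b x.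
Proof. by case: module. Qed.

Lemma actA a b x : act (sc_mul a b) x = act a (act b x).
Proof. by case: module. Qed.

Lemma act1 x : act (sc_one K) x = x.
Proof. by case: module. Qed.

Lemma actr0 a : act a 0 = 0.
Proof. by apply: (@addrI _ (act a 0)); rewrite -actDr !addr0. Qed.

Lemma actrMn a x n : act a (x *+ n) = act a x *+ n.
Proof. by elim: n => [|n IH]; rewrite ?mulr0n ?actr0 // !mulrS actDr IH. Qed.

Lemma d_ge0 x y : 0 <= d x y. Proof. by case: metric. Qed.
Lemma dxx x : d x x = 0. Proof. by case: metric => _ h _ _; apply/h. Qed.
Lemma dC x y : d x y = d y x. Proof. by case: metric. Qed.
Lemma d_triangle x y z : d x z <= d x y + d y z. Proof. by case: metric. Qed.

Lemma d_lipschitz p q p' q' : `|d p q - d p' q'| <= d p p' + d q q'.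
Proof.
have := d_triangle p p' q; have := d_triangle p' q' q.
have := d_triangle p' p q'; have := d_triangle p q q'.
rewrite (dC q' q) (dC p' p) ler_norml => h1 h2 h3 h4; apply/andP; split; lra.
Qed.

Definition dact x y (u : KT) : R := d (act u x) (act u y).

Lemma dact_kcont x y : kcont (dact x y).
Proof.
move=> a e e0.
have [del1 del10 H1] := act_continuous a x (ltac:(lra) : 0 < e / 2).
have [del2 del20 H2] := act_continuous a y (ltac:(lra) : 0 < e / 2).
exists (Num.min del1 del2); first by rewrite lt_min del10 del20.
move=> b; rewrite lt_min => /andP[hb1 hb2].
have := H1 b x hb1 ltac:(by rewrite dxx).
have := H2 b y hb2 ltac:(by rewrite dxx).
by have := d_lipschitz (act a x) (act a y) (act b x) (act b y); rewrite /dact; lra.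
Qed.

End MetricVectorSpace.

Section AsymptoticNorm.
Variables (R : realType) (K : scalars R) (E : zmodType).
Notation KT := (sc_type K).
Notation U := (@unit_sphere R K).
Variables (act : KT -> E -> E) (d : E -> E -> R).
Variables (mu : probability KT R) (iota : R -> KT).
Hypothesis laws : scalar_laws iota.
Hypothesis mvs : metric_vector_space act d.
Hypothesis am : asymptotically_multiplicative act d.
Hypothesis unbounded : unbounded_on_nontrivial_subspaces act d.
Hypothesis sum_cond : sum_condition d.
Hypothesis muU : mu U = 1%E.

Notation D0 := (d0 act d mu).
Notation DS := (delta0_seq act d mu).
Notation delta := (delta0 act d mu).
Let mU := unit_sphere_measurable laws.

Lemma act_iota0 x : act (iota 0) x = 0.
Proof.
by apply: (@addrI _ (act (iota 0) x)); rewrite -(actDl mvs) -(iotaD laws) !addr0.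
Qed.

Lemma act_iotaN t x : act (iota (- t)) x = - act (iota t) x.
Proof. by apply/eqP; rewrite -addr_eq0 -(actDl mvs) -(iotaD laws) addNr act_iota0. Qed.

Lemma act_iota_natr n x : act (iota n%:R) x = x *+ n.
Proof.
elim: n => [|n IH]; first by rewrite act_iota0.
by rewrite -natr1 (iotaD laws) (actDl mvs) IH (iota1 laws) (act1 mvs) mulrSr.
Qed.

Lemma dact_integrable x y : mu.-integrable U (EFin \o dact act d x y).
Proof.
have [C2 [C3 [C20 C30 H]]] := am (ltr1n R 2).
apply: (bounded_integrable (M := 2 * d x y + C2 + C3) mu mU).
  exact: kcont_measurable (kopen_measurable laws) _ (dact_kcont mvs x y).
move=> u Uu; have [_] := H u x y; rewrite Uu !mulr1.
by rewrite ger0_norm ?(d_ge0 mvs).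
Qed.

Lemma d0_ge0 x y : 0 <= D0 x y.
Proof. by apply: Rintegral_ge0 => u _; exact: (d_ge0 mvs). Qed.

Lemma d0xx x : D0 x x = 0.
Proof.
rewrite -[RHS](Rintegral_cst_prob mU muU); apply: eq_Rintegral => u _.
exact: (dxx mvs).
Qed.

(* [unit_conj] turns [d (u (l x)) (u (l y))] into [d (l' (u x)) (l' (u y))]
   with [|l'| = |l|], so no invariance of [mu] is needed. *)
Lemma asymptotically_multiplicative_d0 : asymptotically_multiplicative act D0.
Proof.
move=> C1 /am [C2 [C3 [C20 C30 H]]]; exists C2, C3; split => // l x y.
have bounds u : U u ->
    C1^-1 * sc_abs l * dact act d x y u - C2 * sc_abs l - C3
      <= dact act d (act l x) (act l y) u /\
    dact act d (act l x) (act l y) u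
      <= C1 * sc_abs l * dact act d x y u + C2 * sc_abs l + C3.
  move=> Uu; have [l' l'l ul] := unit_conj laws Uu l.
  by rewrite /dact -!(actA mvs) ul !(actA mvs) -l'l; exact: H.
split; rewrite -addrA.
- apply: ge_Rintegral_affine => //; try exact: dact_integrable.
  by move=> u /bounds[+ _]; rewrite /dact; lra.
- apply: le_Rintegral_affine => //; try exact: dact_integrable.
  by move=> u /bounds[_ +]; rewrite /dact; lra.
Qed.

Lemma d0_add_le C1 : 1 < C1 -> exists2 C0 : R, 0 <= C0 &
  forall x1 x2 y1 y2,
    D0 (x1 + x2) (y1 + y2) <= C1 * (D0 x1 y1 + D0 x2 y2) + 2 * C0.
Proof.
move=> /sum_cond [C0 C00 H]; exists C0 => // x1 x2 y1 y2.
rewrite -RintegralD; try (exact: mU || exact: dact_integrable).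
apply: le_Rintegral_affine => //; first exact: dact_integrable.
  by apply: (eq_integrable mU _ _ _ (integrableD mU (dact_integrable x1 y1)
    (dact_integrable x2 y2))) => u _ /=; rewrite EFinD.
move=> u _; pose xs (i : 'I_2) := act u (if i == ord0 then x1 else x2).
pose ys (i : 'I_2) := act u (if i == ord0 then y1 else y2).
have := H 2%N xs ys isT.
by rewrite !big_ord_recr !big_ord0 /= !add0r /dact !(actDr mvs).
Qed.

Lemma asymptotically_isometric_d0_d : asymptotically_isometric D0 d.
Proof.
move=> A /am [C2 [C3 [C20 C30 H]]]; exists (C2 + C3); first exact: addr_ge0.
have cst_int (c : R) : mu.-integrable U (EFin \o (fun _ => c)).
  exact: finite_measure_integrable_cst.
move=> x y; split.
- rewrite -[X in X <= _](Rintegral_cst_prob mU muU).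
  apply: le_Rintegral => //; [exact: dact_integrable|].
  by move=> u Uu; have [+ _] := H u x y; rewrite Uu !mulr1 /=; lra.
- rewrite -[X in _ <= X](Rintegral_cst_prob mU muU).
  apply: le_Rintegral => //; [exact: dact_integrable|].
  by move=> u Uu; have [_ +] := H u x y; rewrite Uu !mulr1 /=; lra.
Qed.

Lemma d0_mulrn_asymptotically_homogeneous x y :
  asymptotically_homogeneous (fun n => D0 (x *+ n) (y *+ n)).
Proof.
move=> C1 /asymptotically_multiplicative_d0 [C2 [C3 [C20 C30 H]]].
exists C2, C3; split => // m k m0.
have := H (iota (k%:R / m%:R)) (x *+ m) (y *+ m).
rewrite (iota_abs laws) ger0_norm ?divr_ge0 // -(act_iota_natr m x).
rewrite -(act_iota_natr m y) -!(actA mvs) (iotaM laws) divfK ?pnatr_eq0 -?lt0n //.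
by rewrite !act_iota_natr.
Qed.

Lemma delta0_seq_cvg x y : DS x y @ \oo --> delta x y.
Proof.
apply: cvgn_div_asymptotically_homogeneous => [n|].
  exact: d0_ge0.
exact: d0_mulrn_asymptotically_homogeneous.
Qed.

Lemma delta0_ge0 x y : 0 <= delta x y.
Proof.
apply: limr_ge; first exact: delta0_seq_cvg.
by near=> n; rewrite mulr_ge0 ?invr_ge0 ?d0_ge0.
Unshelve. all: by end_near. Qed.

Lemma delta0xx x : delta x x = 0.
Proof.
rewrite /delta0 (_ : DS x x = fun _ => 0) ?lim_cst //.
by apply/funext => n; rewrite /delta0_seq d0xx mulr0.
Qed.

Lemma delta0_translate x y z : delta (x + z) (y + z) = delta x y.
Proof.
suff le_translate x' y' z' : delta (x' + z') (y' + z') <= delta x' y'.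
  apply/le_anti; rewrite le_translate /=.
  by have := le_translate (x + z) (y + z) (- z); rewrite !addrK.
apply: le_of_forall_gt1_mul (delta0_ge0 x' y') _ => C1 /d0_add_le [C0 C00 H].
have := ler_lim_affine (@delta0_seq_cvg (x' + z') (y' + z'))
  (@delta0_seq_cvg x' y') (A := 1) (A' := C1) (K := 0) (B := 2 * C0).
rewrite mul1r addr0; apply => n n0.
have := H (x' *+ n) (z' *+ n) (y' *+ n) (z' *+ n); rewrite d0xx addr0 => h.
rewrite /delta0_seq !mulrnDl mul1r addr0.
apply: le_trans (ler_wpM2l _ h) _; first by rewrite invr_ge0.
by rewrite le_eqVlt; apply/orP; left; apply/eqP; ring.
Qed.

Lemma delta0_sub x y : delta x y = delta (x - y) 0.
Proof. by rewrite -(delta0_translate (x - y) 0 y) subrK add0r. Qed.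

Lemma delta0_seq_act_bounds C1 : 1 < C1 -> exists C2 C3, [/\ 0 <= C2, 0 <= C3 &
  forall a x y n, (0 < n)%N ->
    C1^-1 * sc_abs a * DS x y n - (C2 * sc_abs a + C3) / n%:R
      <= DS (act a x) (act a y) n /\
    DS (act a x) (act a y) n
      <= C1 * sc_abs a * DS x y n + (C2 * sc_abs a + C3) / n%:R].
Proof.
move=> C1gt; have C1_neq0 : C1 != 0 by rewrite gt_eqF // (lt_trans ltr01 C1gt).
have [C2 [C3 [C20 C30 H]]] := asymptotically_multiplicative_d0 C1gt.
exists C2, C3; split => // a x y n n0.
have [lo up] := H a (x *+ n) (y *+ n).
have n_ge0 : 0 <= n%:R^-1 :> R by rewrite invr_ge0.
have n_neq0 : n%:R != 0 :> R by rewrite pnatr_eq0 -lt0n.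
rewrite /delta0_seq -!(actrMn mvs).
split; [apply: le_trans _ (ler_wpM2l n_ge0 lo) | apply: le_trans (ler_wpM2l n_ge0 up) _];
  by rewrite le_eqVlt; apply/orP; left; apply/eqP; field; rewrite ?C1_neq0 ?n_neq0.
Qed.

Lemma delta0_act a x y : delta (act a x) (act a y) = sc_abs a * delta x y.
Proof.
have a_ge0 := abs_ge0 laws a.
apply/le_anti/andP; split.
- apply: le_of_forall_gt1_mul; first by rewrite mulr_ge0 ?delta0_ge0.
  move=> C1 /delta0_seq_act_bounds [C2 [C3 [_ _ H]]].
  have := ler_lim_affine (@delta0_seq_cvg (act a x) (act a y))
    (@delta0_seq_cvg x y) (A := 1) (A' := C1 * sc_abs a) (K := 0)
    (B := C2 * sc_abs a + C3).
  rewrite mul1r addr0 mulrA; apply => n n0.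
  by have [_] := H a x y n n0; rewrite mul1r addr0.
- apply: le_of_forall_gt1_mul; first exact: delta0_ge0.
  move=> C1 C1gt; have [C2 [C3 [_ _ H]]] := delta0_seq_act_bounds C1gt.
  have C1_gt0 : 0 < C1 by apply: lt_trans C1gt.
  have : C1^-1 * sc_abs a * delta x y <= 1 * delta (act a x) (act a y) + 0.
    apply: (ler_lim_affine (@delta0_seq_cvg x y)
      (@delta0_seq_cvg (act a x) (act a y)) (B := C2 * sc_abs a + C3)) => n n0.
    by have [+ _] := H a x y n n0; rewrite mul1r addr0; lra.
  move=> /(ler_wpM2l (ltW C1_gt0)); rewrite mul1r addr0 !mulrA mulfV ?gt_eqF //.
  by rewrite mul1r.
Qed.

Lemma delta0_act0 a x : delta (act a x) 0 = sc_abs a * delta x 0.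
Proof. by rewrite -{1}(actr0 mvs a) delta0_act. Qed.

Lemma delta0_triangle x y : delta (x + y) 0 <= delta x 0 + delta y 0.
Proof.
apply: le_of_forall_gt1_mul; first by rewrite addr_ge0 ?delta0_ge0.
move=> C1 /d0_add_le [C0 C00 H].
have cvg_sum : (fun n => DS x 0 n + DS y 0 n) @ \oo --> delta x 0 + delta y 0.
  by apply: cvgD; exact: delta0_seq_cvg.
have := ler_lim_affine (@delta0_seq_cvg (x + y) 0) cvg_sum
  (A := 1) (A' := C1) (K := 0) (B := 2 * C0).
rewrite mul1r addr0; apply => n n0.
have := H (x *+ n) (y *+ n) 0 0; rewrite addr0 => h.
rewrite /delta0_seq !mul0rn mulrnDl mul1r addr0.
apply: le_trans (ler_wpM2l _ h) _; first by rewrite invr_ge0.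
by rewrite le_eqVlt; apply/orP; left; apply/eqP; ring.
Qed.

Lemma asymptotically_isometric_delta0_d0 : asymptotically_isometric delta D0.
Proof.
move=> C1 C1gt; have C1_neq0 : C1 != 0 by rewrite gt_eqF // (lt_trans ltr01 C1gt).
have [C2 [C3 [C20 C30 H]]] := asymptotically_multiplicative_d0 C1gt.
exists C2 => // x y.
have bounds n : (0 < n)%N ->
    C1^-1 * D0 x y - C2 - C3 / n%:R <= DS x y n /\
    DS x y n <= C1 * D0 x y + C2 + C3 / n%:R.
  move=> n0; have n_ge0 : 0 <= n%:R^-1 :> R by rewrite invr_ge0.
  have n_neq0 : n%:R != 0 :> R by rewrite pnatr_eq0 -lt0n.
  have [lo up] := H (iota n%:R) x y.
  rewrite (iota_abs laws) ger0_norm // !act_iota_natr in lo up.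
  split; [apply: le_trans _ (ler_wpM2l n_ge0 lo) | apply: le_trans (ler_wpM2l n_ge0 up) _];
    by rewrite le_eqVlt; apply/orP; left; apply/eqP; field; rewrite ?C1_neq0 ?n_neq0.
split.
- have := ler_lim_affine (cvg_cst (D0 x y)) (@delta0_seq_cvg x y)
    (A := C1^-1) (A' := 1) (K := C2) (B := C3).
  rewrite mul1r => le_delta; suff : C1^-1 * D0 x y <= delta x y + C2 by lra.
  by apply: le_delta => n /bounds[+ _]; lra.
- have := ler_lim_affine (@delta0_seq_cvg x y) (cvg_cst (D0 x y))
    (A := 1) (A' := C1) (K := C2) (B := C3).
  rewrite mul1r; apply => n /bounds[_ +]; lra.
Qed.

Lemma asymptotically_isometric_delta0_d : asymptotically_isometric delta d.
Proof.
apply: asymptotically_isometric_trans asymptotically_isometric_delta0_d0 _.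
exact: asymptotically_isometric_d0_d.
Qed.

(* On the line [K x] the distance [d] is unbounded, while [delta] vanishes
   identically if [delta x 0 = 0]; the two cannot be asymptotically isometric. *)
Lemma delta0_eq0 x : delta x 0 = 0 -> x = 0.
Proof.
move=> delta_x0; apply: contrapT => x_neq0.
pose F := [set z | exists a, z = act a x].
have F_subspace : linear_subspace act F.
  split.
  - by exists (iota 0); rewrite act_iota0.
  - by move=> _ _ [a ->] [b ->]; exists (sc_add a b); rewrite (actDl mvs).
  - by move=> c _ [a ->]; exists (sc_mul c a); rewrite (actA mvs).
have F_nontrivial : exists2 z, F z & z <> 0.
  by exists x => //; exists (sc_one K); rewrite (act1 mvs).
have [B B0 HB] := asymptotically_isometric_delta0_d (ltr1n R 2).
have [_ [_ [[a ->] [b ->] dB]]] := unbounded F_subspace F_nontrivial (2 * B).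
have [+ _] := HB (act a x) (act b x).
rewrite delta0_sub -[X in act a x - X](act1 mvs) -(iota1 laws) -act_iotaN.
by rewrite -(actA mvs) -(actDl mvs) delta0_act0 delta_x0 mulr0; lra.
Qed.

Theorem delta0_asymptotic_norm :
  let N := fun x => delta x 0 in
  [/\ (forall x y, cvgn (DS x y)),
      (forall x y z, delta (x + z) (y + z) = delta x y),
      (forall x y, delta x y = N (x - y)) &
      is_norm act N] /\
  asymptotically_isometric (fun x y => N (x - y)) D0 /\
  asymptotically_isometric (fun x y => N (x - y)) d.
Proof.
move=> N.
have iso_N (rho : E -> E -> R) : asymptotically_isometric delta rho ->
    asymptotically_isometric (fun x y => N (x - y)) rho.
  by move=> iso A A1; have [B B0 HB] := iso A A1; exists B => // x y; rewrite /N -delta0_sub.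
split; [|split; apply: iso_N].
- split; [exact: delta0_seq_cvg | exact: delta0_translate | exact: delta0_sub |].
  split => [x|x|a x|x y]; rewrite /N.
  + exact: delta0_ge0.
  + by split => [|->]; [exact: delta0_eq0 | exact: delta0xx].
  + exact: delta0_act0.
  + exact: delta0_triangle.
- exact: asymptotically_isometric_delta0_d0.
- exact: asymptotically_isometric_delta0_d.
Qed.

End AsymptoticNorm.

Lemma measurable_of_countable_base d (T : measurableType d) (I : countType)
    (B : I -> set T) (O : set T) :
  (forall i, measurable (B i)) -> (forall u, O u -> exists i, B i u /\ B i `<=` O) ->
  measurable O.
Proof.
move=> mB cover.
have -> : O = \bigcup_i [set v | B i v /\ B i `<=` O].
  apply/seteqP; split => [u /cover[i Bi]|u [i _ [Bu BO]]]; [by exists i | exact: BO].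
apply: countable_bigcupT_measurable => [|i]; first exact: countableP.
have [BO|nBO] := pselect (B i `<=` O).
- by rewrite (_ : [set v | _] = B i) //; apply/seteqP; split => v // [].
- by rewrite (_ : [set v | _] = set0) //; apply/seteqP; split => v // [].
Qed.

Section RationalBalls.
Variable R : realType.

Lemma exists_rat_ball (x r : R) : 0 < r -> exists q : rat, ball (ratr q : R) r x.
Proof.
move=> r0; have [q] := rat_in_itvoo (ltac:(lra) : x - r < x + r).
rewrite in_itv /= => /andP[h1 h2]; exists q.
by rewrite /ball /= ltr_norml; apply/andP; split; lra.
Qed.

Lemma exists_rat_between0 (e : R) : 0 < e -> exists r : rat, 0 < (ratr r : R) < e.
Proof. by move=> e0; have [r] := rat_in_itvoo e0; rewrite in_itv /=; exists r. Qed.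

Lemma small_ball_radius (e : R) : 0 < e ->
  exists r : rat, 0 < (ratr r : R) /\ 16 * (ratr r : R) ^+ 2 < e ^+ 2.
Proof.
move=> e0; have [r /andP[r0 re]] := exists_rat_between0 (ltac:(lra) : 0 < e / 4).
by exists r; split => //; nra.
Qed.

Lemma ball_sqr_subr_lt (c r a b : R) : ball c r a -> ball c r b ->
  (a - b) ^+ 2 < 4 * r ^+ 2.
Proof. by rewrite /ball /= !ltr_norml => /andP[h1 h2] /andP[h3 h4]; nra. Qed.

Lemma sqrtr_lt_sqr (S e : R) : 0 < e -> S < e ^+ 2 -> Num.sqrt S < e.
Proof.
move=> e0 Se; rewrite -[X in _ < X]ger0_norm ?ltW // -sqrtr_sqr ltr_sqrt //.
by rewrite exprn_gt0.
Qed.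

Lemma sqrtr_eq1 (x : R) : 0 <= x -> (Num.sqrt x = 1) <-> (x = 1).
Proof.
by move=> x0; split => [h|->]; [rewrite -[x]sqr_sqrtr // h expr1n | exact: sqrtr1].
Qed.

End RationalBalls.

Section ScalarInstances.
Variable R : realType.

Lemma real_kopen_measurable (O : set (sc_type (real_scalars R))) :
  kopen O -> measurable O.
Proof.
move=> O_open; apply: open_measurable; rewrite openE => x Ox.
have [e e0 He] := O_open x Ox.
by apply/nbhs_ballP; exists e => // y; rewrite -ball_normE /= => h; apply: He.
Qed.

(* The sigma-algebras on R^2 and R^4 are product sigma-algebras, so open sets
   are measurable as countable unions of rational boxes. *)
Lemma complex_kopen_measurable (O : set (sc_type (complex_scalars R))) :
  kopen O -> measurable O.
Proof.
move=> O_open.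
pose B (i : rat * rat * rat) : set (R * R) :=
  ball (ratr i.1.1 : R) (ratr i.2) `*` ball (ratr i.1.2 : R) (ratr i.2).
apply: (measurable_of_countable_base (B := B)) => [i|u Ou].
  by apply: measurableX; exact: measurable_ball.
have [e e0 He] := O_open u Ou.
have [r [r0 re]] := small_ball_radius e0.
have [q1 h1] := exists_rat_ball u.1 r0; have [q2 h2] := exists_rat_ball u.2 r0.
exists (q1, q2, r); split => // v [/= v1 v2]; apply: He.
apply: sqrtr_lt_sqr => //=.
have := ball_sqr_subr_lt h1 v1; have := ball_sqr_subr_lt h2 v2; nra.
Qed.

Lemma quaternion_kopen_measurable (O : set (sc_type (quaternion_scalars R))) :
  kopen O -> measurable O.
Proof.
move=> O_open.
pose B (i : rat * rat * rat * rat * rat) : set ((R * R) * (R * R)) :=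
  (ball (ratr i.1.1.1.1 : R) (ratr i.2) `*` ball (ratr i.1.1.1.2 : R) (ratr i.2))
  `*` (ball (ratr i.1.1.2 : R) (ratr i.2) `*` ball (ratr i.1.2 : R) (ratr i.2)).
apply: (measurable_of_countable_base (B := B)) => [i|u Ou].
  by apply: measurableX; apply: measurableX; exact: measurable_ball.
have [e e0 He] := O_open u Ou.
have [r [r0 re]] := small_ball_radius e0.
have [q1 h1] := exists_rat_ball u.1.1 r0; have [q2 h2] := exists_rat_ball u.1.2 r0.
have [q3 h3] := exists_rat_ball u.2.1 r0; have [q4 h4] := exists_rat_ball u.2.2 r0.
exists (q1, q2, q3, q4, r); split => // v [[/= v1 v2] [/= v3 v4]]; apply: He.
apply: sqrtr_lt_sqr => //=.
have := ball_sqr_subr_lt h1 v1; have := ball_sqr_subr_lt h2 v2.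
have := ball_sqr_subr_lt h3 v3; have := ball_sqr_subr_lt h4 v4; nra.
Qed.

Lemma real_unit_sphere_measurable : measurable (@unit_sphere R (real_scalars R)).
Proof.
have -> : @unit_sphere R (real_scalars R) = (fun x : R => `|x|) @^-1` [set 1] by [].
rewrite -[X in measurable X]setTI; exact: normr_measurable (measurable_set1 _).
Qed.

Lemma complex_unit_sphere_measurable :
  measurable (@unit_sphere R (complex_scalars R)).
Proof.
pose sq (u : R * R) := u.1 ^+ 2 + u.2 ^+ 2.
have -> : @unit_sphere R (complex_scalars R) = sq @^-1` [set 1].
  by rewrite predeqE => u; apply: sqrtr_eq1; rewrite addr_ge0 ?sqr_ge0.
have sq_measurable : measurable_fun setT sq.
  by apply: measurable_funD; apply: measurable_funX;
    [exact: measurable_fst | exact: measurable_snd].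
by rewrite -[X in measurable X]setTI; apply: sq_measurable => //; exact: measurable_set1.
Qed.

Lemma quaternion_unit_sphere_measurable :
  measurable (@unit_sphere R (quaternion_scalars R)).
Proof.
pose sq (u : (R * R) * (R * R)) := u.1.1 ^+ 2 + u.1.2 ^+ 2 + u.2.1 ^+ 2 + u.2.2 ^+ 2.
have -> : @unit_sphere R (quaternion_scalars R) = sq @^-1` [set 1].
  by rewrite predeqE => u; apply: sqrtr_eq1; rewrite !addr_ge0 ?sqr_ge0.
have sq_measurable : measurable_fun setT sq.
  by repeat apply: measurable_funD; apply: measurable_funX;
    apply: measurableT_comp; (exact: measurable_fst || exact: measurable_snd).
by rewrite -[X in measurable X]setTI; apply: sq_measurable => //; exact: measurable_set1.
Qed.

Lemma qmul_unit_conj (u l : (R * R) * (R * R)) : qabs u = 1 ->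
  exists2 l', qabs l' = qabs l & qmul u l = qmul l' u.
Proof.
case: u => [[a b] [c e]]; case: l => [[p q] [r s]] /sqrtr_eq1 u1.
have {}u1 : a ^+ 2 + b ^+ 2 + c ^+ 2 + e ^+ 2 = 1 by apply: u1; rewrite !addr_ge0 ?sqr_ge0.
exists (qmul (qmul ((a, b), (c, e)) ((p, q), (r, s))) ((a, - b), (- c, - e))).
  rewrite /qabs /=; congr Num.sqrt.
  by rewrite -[RHS]mulr1 -[RHS]mulr1 -u1; ring.
by rewrite /=; congr ((_, _), (_, _)); rewrite -[LHS]mulr1 -u1; ring.
Qed.

Lemma real_scalar_laws : scalar_laws (K := real_scalars R) id.
Proof.
split => //= [u _ l||]; first by exists l => //; rewrite mulrC.
- exact: real_unit_sphere_measurable.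
- exact: real_kopen_measurable.
Qed.

Lemma complex_scalar_laws : scalar_laws (K := complex_scalars R) (fun t => (t, 0)).
Proof.
split => /= [t|s t|s t||a|u _ l||].
- by rewrite expr0n /= addr0 sqrtr_sqr.
- by rewrite addr0.
- by rewrite /cmul /=; congr (_, _); ring.
- by [].
- exact: sqrtr_ge0.
- by exists l => //; rewrite /cmul; congr (_, _); ring.
- exact: complex_unit_sphere_measurable.
- exact: complex_kopen_measurable.
Qed.

Lemma quaternion_scalar_laws :
  scalar_laws (K := quaternion_scalars R) (fun t => ((t, 0), (0, 0))).
Proof.
split => /= [t|s t|s t||a|u||].
- by rewrite /qabs /= expr0n /= !addr0 sqrtr_sqr.
- by rewrite /qadd /= !addr0.
- by rewrite /qmul /=; congr ((_, _), (_, _)); ring.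
- by [].
- exact: sqrtr_ge0.
- by move=> hu l; apply: qmul_unit_conj.
- exact: quaternion_unit_sphere_measurable.
- exact: quaternion_kopen_measurable.
Qed.

End ScalarInstances.

Theorem proposition9 (R : realType) (k : scalar_kind) (E : zmodType)
  (act : sc_type (scal R k) -> E -> E) (d : E -> E -> R)
  (mu : probability (sc_type (scal R k)) R) :
  metric_vector_space act d ->
  asymptotically_multiplicative act d ->
  unbounded_on_nontrivial_subspaces act d ->
  sum_condition d ->
  right_haar_probability mu ->
  let delta := delta0 act d mu in
  let N := fun x => delta x 0 in
  [/\ (forall x y, cvgn (delta0_seq act d mu x y)),
      (forall x y z, delta (x + z) (y + z) = delta x y),
      (forall x y, delta x y = N (x - y)) &
      is_norm act N] /\
  asymptotically_isometric (fun x y => N (x - y)) (d0 act d mu) /\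
  asymptotically_isometric (fun x y => N (x - y)) d.
Proof.
move=> mvs am unbounded sum_cond [muU _].
case: k act mu mvs am unbounded muU => act mu mvs am unbounded muU.
- exact: delta0_asymptotic_norm (real_scalar_laws R) mvs am unbounded sum_cond muU.
- exact: delta0_asymptotic_norm (complex_scalar_laws R) mvs am unbounded sum_cond muU.
- exact: delta0_asymptotic_norm (quaternion_scalar_laws R) mvs am unbounded sum_cond muU.
Qed.
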